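(* Let $n\ge1$. (1) For a permutation $\pi$ of $\{0,\ldots,2^n-1\}$, the following are equivalent: $\pi$ is admissible; (a) for all $k<2^n$, $\mathrm{Weight}(\pi(k))=\mathrm{IStep}(n,k)$; (b) for all $i<n$, $\pi[\mathrm{I}A_{n,i}]=\mathrm{I}B_{n,i}$; (c) $\mathrm{I}S^*_n=\mathrm{I}S_n\circ\pi$. (2) The number of admissible permutations of $\{0,\ldots,2^n-1\}$ is $\prod_{i=0}^n\left(\binom{n}{i}!\right)$.
   Context: For $x\in(0,1)$ write $x=\sum_{i\ge1}\varepsilon_i(x)2^{-i}$ with $\varepsilon_i(x)\in\{0,1\}$ and infinitely many $\varepsilon_i(x)=0$; let $S_n(x)=\sum_{i=1}^n(-1)^{1+\varepsilon_i(x)}$, and let $S^*_n$ be the quantile function of $S_n$ with respect to Lebesgue measure on $(0,1)$: $S^*_n(x)=\inf\{t: F_{S_n}(t)\ge x\}$. Dyadic intervals: $D_{n,0}=(0,2^{-n})$, $D_{n,k}=[k2^{-n},(k+1)2^{-n})$ for $0<k<2^n$; $S_n$ and $S^*_n$ are constant on each $D_{n,k}$, and $\mathrm{I}S_n(k)$, $\mathrm{I}S^*_n(k)$ denote these constant values. A permutation $\pi$ of $\{0,\ldots,2^n-1\}$ is admissible if for all $k$, all $x\in D_{n,k}$, all $y\in D_{n,\pi(k)}$: $S^*_n(x)=S_n(y)$. Let $\mathrm{SBC}(n,0)=0$ and $\mathrm{SBC}(n,i)=\sum_{j=0}^{i-1}\binom{n}{j}$ for $1\le i\le n+1$. For $0\le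 k<2^n$, $\mathrm{IStep}(n,k)$ is the unique $i\in\{0,\ldots,n\}$ with $\mathrm{SBC}(n,i)\le k<\mathrm{SBC}(n,i+1)$. $\mathrm{Weight}(k)$ is the number of 1's in the binary representation of $k$. $\mathrm{I}A_{n,i}=\{k<2^n:\mathrm{IStep}(n,k)=i\}$ and $\mathrm{I}B_{n,i}=\{k<2^n:\mathrm{Weight}(k)=i\}$. *)

From HB Require Import structures.
From mathcomp Require Import all_boot all_order all_algebra all_fingroup.
From mathcomp Require Import all_classical all_reals all_analysis.
Set Implicit Arguments. Unset Strict Implicit. Unset Printing Implicit Defensive.
Import Order.TTheory GRing.Theory Num.Theory.
Local Open Scope classical_set_scope.
Local Open Scope ring_scope.

Section Defs.
Variable R : realType.

(* i-th binary digit of x (i >= 1), for the expansion with infinitely many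
   zeros: eps_i(x) = floor(2^i x) mod 2. *)
Definition eps (i : nat) (x : R) : bool := odd `|Num.floor (x * 2 ^+ i)|%N.

Definition S (n : nat) (x : R) : R :=
  \sum_(1 <= i < n.+1) (-1) ^+ (1 + eps i x).

Definition F_S (n : nat) (t : R) : R :=
  fine (@lebesgue_measure R ([set` `]0, 1[] `&` [set x | S n x <= t])).

Definition Sstar (n : nat) (x : R) : R := inf [set t : R | x <= F_S n t].

Definition D (n k : nat) : set R :=
  if k == 0%N then [set` `]0, 2 ^- n[]
  else [set` `[k%:R / 2 ^+ n, k.+1%:R / 2 ^+ n[].

Definition Dint (n k : nat) : set R := [set` `]k%:R / 2 ^+ n, k.+1%:R / 2 ^+ n[].

(* the constant values of S_n, S*_n on D_{n,k}, read off at the midpoint *)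
Definition IS (n k : nat) : R := S n ((k.*2.+1)%:R / 2 ^+ n.+1).
Definition ISstar (n k : nat) : R := Sstar n ((k.*2.+1)%:R / 2 ^+ n.+1).

Definition admissible (n : nat) (pi : {perm 'I_(2 ^ n)}) : Prop :=
  forall k : 'I_(2 ^ n), forall x y : R,
    x \in Dint n k -> y \in D n (pi k) -> Sstar n x = S n y.
End Defs.
Local Close Scope ring_scope.
Local Open Scope nat_scope.

Definition SBC (n i : nat) : nat := \sum_(j < i) 'C(n, j).

Definition IStep (n k : nat) : nat :=
  odflt 0%N (omap (@nat_of_ord n.+1)
    [pick i : 'I_n.+1 | (SBC n i <= k) && (k < SBC n i.+1)]).

Definition Weight (k : nat) : nat := \sum_(j < k.+1) odd (k %/ 2 ^ j).

Definition IA (n i : nat) : {set 'I_(2 ^ n)} := [set k : 'I_(2 ^ n) | IStep n k == i].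
Definition IB (n i : nat) : {set 'I_(2 ^ n)} := [set k : 'I_(2 ^ n) | Weight k == i].

(* On the dyadic interval D_{n,k} the first n binary digits of x are those of
   k, read from the most significant bit, so S_n = 2 w - n there, w being the
   number of ones among the n low bits of k.  Hence S_n is 2 w - n on exactly
   C(n, w) of the 2^n dyadic intervals of length 2^-n, and its quantile
   function S*_n is the nondecreasing step function equal to 2 i - n on the
   i-th block of C(n, i) consecutive intervals: S*_n = 2 IStep(n, k) - n on
   D_{n,k}.  Admissibility therefore means Weight (pi k) = IStep(n, k), i.e.
   pi maps each block IA_{n,i} bijectively onto IB_{n,i}; counting these
   bijections block by block gives the product of the factorials. *)

From HB Require Import structures.
From mathcomp Require Import all_boot all_order all_algebra all_fingroup.
From mathcomp Require Import all_classical all_reals all_analysis.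
From mathcomp Require Import ring lra zify.
Import Order.TTheory GRing.Theory Num.Theory.
Set Implicit Arguments. Unset Strict Implicit. Unset Printing Implicit Defensive.

Section BinaryCounting.
Local Open Scope nat_scope.

Definition low_weight (n k : nat) : nat := \sum_(j < n) odd (k %/ 2 ^ j).

Lemma low_weightS n k : low_weight n.+1 k = odd k + low_weight n k./2.
Proof.
rewrite /low_weight big_ord_recl expn0 divn1; congr (_ + _).
by apply: eq_bigr => j _; rewrite expnS divnMA divn2.
Qed.

Lemma low_weight_le n k : low_weight n k <= n.
Proof.
rewrite -[leqRHS]card_ord -sum1_card; apply: leq_sum => j _; exact: leq_b1.
Qed.

Lemma low_weight_widen n m k : k < 2 ^ n -> n <= m -> low_weight m k = low_weight n k.
Proof.
move=> kn nm; rewrite /low_weight.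
rewrite -!(big_mkord xpredT (fun j => nat_of_bool (odd (k %/ 2 ^ j)))).
rewrite (big_cat_nat (leq0n n) nm) /=.
rewrite [X in _ + X]big_nat_cond [X in _ + X]big1 ?addn0 // => j /andP[/andP[nj _] _].
by rewrite divn_small // (leq_trans kn) // leq_exp2l.
Qed.

Lemma Weight_low_weight n k : k < 2 ^ n -> Weight k = low_weight n k.
Proof.
move=> kn; have kk : k < 2 ^ k.+1 by rewrite ltnW // ltn_expl.
rewrite -[Weight k]/(low_weight k.+1 k).
by rewrite -(low_weight_widen kk (leq_maxr n k.+1)) (low_weight_widen kn (leq_maxl n k.+1)).
Qed.

Lemma sum_ord_double (F : nat -> nat) m :
  \sum_(k < m.*2) F k = \sum_(q < m) (F q.*2 + F q.*2.+1).
Proof.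
elim: m => [|m IH]; first by rewrite !big_ord0.
by rewrite doubleS !big_ord_recr /= IH addnA.
Qed.

Lemma count_low_weight n j : \sum_(k < 2 ^ n) (low_weight n k == j) = 'C(n, j).
Proof.
elim: n j => [|n IH] j.
  by rewrite big_ord1 /low_weight big_ord0 bin0n eq_sym.
have weight_even q : low_weight n.+1 q.*2 = low_weight n q.
  by rewrite low_weightS odd_double doubleK.
have weight_odd q : low_weight n.+1 q.*2.+1 = (low_weight n q).+1.
  by rewrite low_weightS /= odd_double uphalf_double.
rewrite expnS mul2n (sum_ord_double (fun k => low_weight n.+1 k == j)).
under eq_bigr => q _ do rewrite weight_even weight_odd.
case: j => [|j]; last by rewrite binS -!IH -big_split.
transitivity 'C(n, 0); last by rewrite !bin0.
by rewrite -IH; under eq_bigr => q _ do rewrite addn0.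
Qed.

Lemma card_set_sum (T : finType) (P : pred T) : #|[set x | P x]| = \sum_x P x.
Proof. by rewrite -sum1dep_card big_mkcond; apply: eq_bigr => x _; case: (P x). Qed.

Lemma card_ord_itv N a b : b <= N -> #|[set k : 'I_N | a <= k < b]| = b - a.
Proof.
move=> bN; rewrite -sum1dep_card -(big_ord_widen_cond _ (leq a) (fun=> 1) bN).
by rewrite -(big_geq_mkord a b xpredT (fun=> 1)) sum_nat_const_nat muln1.
Qed.

Lemma SBCS n i : SBC n i.+1 = SBC n i + 'C(n, i).
Proof. exact: big_ord_recr. Qed.

Lemma SBC_mono n : {homo SBC n : i j / i <= j}.
Proof. by apply: homo_leq => [//|j i k|i]; [exact: leq_trans | rewrite SBCS leq_addr]. Qed.

Lemma SBC_full n : SBC n n.+1 = 2 ^ n.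
Proof.
rewrite -[2]/(1 + 1) expnDn; apply: eq_bigr => i _.
by rewrite !exp1n !muln1.
Qed.

Lemma SBC_block_uniq n k i j :
  SBC n i <= k < SBC n i.+1 -> SBC n j <= k < SBC n j.+1 -> i = j.
Proof.
wlog ij : i j / i <= j.
  move=> hwlog hi hj; case/orP: (leq_total i j) => ij; first exact: hwlog.
  by symmetry; apply: hwlog.
move=> /andP[_ ki] /andP[jk _]; apply/eqP; rewrite eqn_leq ij leqNgt.
apply/negP => /(SBC_mono n) iSj.
by move: (leq_ltn_trans (leq_trans iSj jk) ki); rewrite ltnn.
Qed.

Lemma IStep_eq n k i : i <= n -> SBC n i <= k < SBC n i.+1 -> IStep n k = i.
Proof.
move=> i_le_n ik; rewrite /IStep; case: pickP => [j /= jk|].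
  exact: SBC_block_uniq jk ik.
by move/(_ (Ordinal (i_le_n : i < n.+1))); rewrite /= ik.
Qed.

Lemma IStep_block n k : k < 2 ^ n ->
  IStep n k <= n /\ SBC n (IStep n k) <= k < SBC n (IStep n k).+1.
Proof.
move=> kn; have ex : exists i, k < SBC n i.+1 by exists n; rewrite SBC_full.
case: (ex_minnP ex) => i ki i_min; have i_le_n : i <= n by apply: i_min; rewrite SBC_full.
suff ik : SBC n i <= k < SBC n i.+1 by rewrite (IStep_eq i_le_n ik).
rewrite ki andbT; case: i ki i_min {i_le_n} => [|i] _ i_min; first by rewrite /SBC big_ord0.
by rewrite leqNgt; apply/negP => /i_min; rewrite ltnn.
Qed.

Lemma IStep_le n k : k < 2 ^ n -> IStep n k <= n.
Proof. by case/IStep_block. Qed.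

Lemma IStepE n k i : k < 2 ^ n -> i <= n ->
  (IStep n k == i) = (SBC n i <= k < SBC n i.+1).
Proof.
move=> kn i_le_n; apply/eqP/idP => [<-|]; last exact: IStep_eq.
by case: (IStep_block kn).
Qed.

Lemma card_IA n i : #|IA n i| = 'C(n, i).
Proof.
have [i_le_n | n_lt_i] := leqP i n.
  rewrite -[RHS](addKn (SBC n i)) -SBCS -(@card_ord_itv (2 ^ n)).
    by apply: eq_card => k; rewrite !inE IStepE.
  by rewrite -SBC_full SBC_mono.
rewrite bin_small //; apply/eqP; rewrite cards_eq0; apply/eqP/setP => k; rewrite !inE.
by apply/negbTE; apply: contraTneq (IStep_le (ltn_ord k)) => ->; rewrite -ltnNge.
Qed.

Lemma card_IB n i : #|IB n i| = 'C(n, i).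
Proof.
rewrite card_set_sum -count_low_weight; apply: eq_bigr => k _.
by rewrite (Weight_low_weight (ltn_ord k)).
Qed.

Lemma card_low_weight_lt n j : #|[set k : 'I_(2 ^ n) | low_weight n k < j]| = SBC n j.
Proof.
have lt_sum w : (w < j) = \sum_(i < j) (w == i) :> nat.
  elim: j => [|j IH]; first by rewrite big_ord0.
  by rewrite big_ord_recr /= -IH ltnS leq_eqVlt orbC; case: ltngtP.
rewrite card_set_sum /SBC; under eq_bigr => k _ do rewrite lt_sum.
by rewrite exchange_big /=; apply: eq_bigr => i _; exact: count_low_weight.
Qed.

End BinaryCounting.

Definition fibre (T : finType) (X : {set T}) (h : T -> nat) (i : nat) : {set T} :=
  [set x in X | h x == i].

Definition fibre_perms (T : finType) (X : {set T}) (f g : T -> nat) : {set {perm T}} :=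
  [set pi : {perm T} | perm_on X pi && [forall x, f (pi x) == g x]].

Section FibrePerms.
Variable T : finType.

Lemma card_fibreD1 (X : {set T}) h z i : z \in X ->
  #|fibre X h i| = (h z == i) + #|fibre (X :\ z) h i|.
Proof.
move=> zX; rewrite (cardsD1 z) !inE zX; congr (_ + _).
by apply: eq_card => x; rewrite !inE andbA.
Qed.

Lemma card_fibre_tperm (X : {set T}) f x0 y i : x0 \in X -> y \in X ->
  #|fibre X (f \o tperm x0 y) i| = #|fibre X f i|.
Proof.
move=> x0X yX; rewrite -[RHS](card_preimset _ (@perm_inj _ (tperm x0 y))).
apply: eq_card => x; rewrite !inE /=.
by case: tpermP => [->|->|]; rewrite ?x0X ?yX.
Qed.

Lemma card_fibre_perms_at (X : {set T}) f g x0 y : x0 \in X -> y \in X ->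
  #|[set pi in fibre_perms X f g | pi x0 == y]| =
  #|fibre_perms (X :\ x0) (f \o tperm x0 y) g|.
Proof.
move=> x0X yX; set t := tperm x0 y.
have t_out x : x \notin X -> t x = x.
  by move=> xX; rewrite /t tpermD //; apply: contraNneq xX => <-.
rewrite -(card_preimset _ (mulIg t)); apply: eq_card => q; rewrite !inE.
have -> : [forall x, f ((q * t)%g x) == g x] = [forall x, (f \o t) (q x) == g x].
  by apply: eq_forallb => x; rewrite permM.
rewrite -andbA [_ && (_ == y)]andbC andbA; apply: andb_id2r => _.
rewrite permM; apply/andP/idP => [[qt_on /eqP qtx0]|q_on].
  have qx0 : q x0 = x0 by apply: (@perm_inj _ t); rewrite qtx0 /t tpermL.
  apply/fintype.subsetP => x; rewrite !inE; apply: contraR; rewrite negb_and negbK.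
  case/orP => [/eqP->|xX]; first by rewrite qx0.
  by rewrite -[q x](tpermK x0 y) -/t -[t (q x)]permM (out_perm qt_on xX) t_out.
have qx0 : q x0 = x0 by apply: out_perm q_on _; rewrite !inE eqxx.
split; last by rewrite qx0 tpermL.
have x0yX : [set x0; y] \subset X by rewrite finset.subUset !finset.sub1set x0X yX.
have X0X : X :\ x0 \subset X := subsetDl X [set x0].
apply: perm_onM; first exact: fintype.subset_trans q_on X0X.
exact: fintype.subset_trans (tperm_on x0 y) x0yX.
Qed.

Variables (g : T -> nat) (m : nat).
Hypothesis g_lt : forall x, g x < m.

Lemma prod_fact_fibreD1 (X : {set T}) x0 : x0 \in X ->
  \prod_(i < m) (#|fibre X g i|)`! =
  #|fibre X g (g x0)| * \prod_(i < m) (#|fibre (X :\ x0) g i|)`!.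
Proof.
move=> x0X; pose i0 := Ordinal (g_lt x0).
rewrite (bigD1 i0) // [in RHS](bigD1 i0) //= mulnA (card_fibreD1 _ _ x0X) eqxx add1n factS.
congr (_ * _); apply: eq_bigr => i i_ne; rewrite (card_fibreD1 _ _ x0X).
suff /negbTE-> : g x0 != i by [].
by apply: contra i_ne => /eqP gx0; apply/eqP/val_inj.
Qed.

(* Induction on #|X|: sorting the permutations by the image y of some x0 in X,
   composition with the transposition (x0 y) reduces each class to X :\ x0. *)
Lemma card_fibre_perms (X : {set T}) f :
  (forall x, x \notin X -> f x = g x) ->
  (forall i, #|fibre X f i| = #|fibre X g i|) ->
  #|fibre_perms X f g| = \prod_(i < m) (#|fibre X g i|)`!.
Proof.
have [N] := ubnP #|X|; elim: N X f => // N IH X f XN f_out f_fib.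
case: (set_0Vmem X) => [X0|[x0 x0X]].
  have fibre0 h i : fibre X h i = finset.set0 by apply/setP => x; rewrite !inE X0 inE.
  rewrite big1 => [|i _]; last by rewrite fibre0 cards0.
  apply/eqP/cards1P; exists 1%g; apply/setP => pi; rewrite !inE X0.
  apply/andP/eqP => [[pi1 _]|->]; first by apply/permP => x; rewrite perm1 (out_perm pi1) ?inE.
  by rewrite perm_on1; split=> //; apply/forallP => x; rewrite perm1 f_out ?X0 ?inE.
have perms_at y : y \in fibre X f (g x0) ->
    #|[set pi in fibre_perms X f g | pi x0 == y]| =
    \prod_(i < m) (#|fibre (X :\ x0) g i|)`!.
  rewrite inE => /andP[yX /eqP fy]; rewrite card_fibre_perms_at //; apply: IH.
  - by move: XN; rewrite (cardsD1 x0) x0X.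
  - move=> x; rewrite !inE negb_and negbK /= => /orP[/eqP->|xX]; first by rewrite tpermL.
    by rewrite tpermD ?f_out //; apply: contraNneq xX => <-.
  - move=> i; apply/eqP; rewrite -(eqn_add2l (g x0 == i)) -card_fibreD1 //.
    rewrite -f_fib -(card_fibre_tperm f i x0X yX) (card_fibreD1 _ _ x0X) /= tpermL fy.
    by [].
rewrite -sum1_card (partition_big (fun pi : {perm T} => pi x0) [in fibre X f (g x0)]) /=.
  rewrite (eq_bigr (fun=> \prod_(i < m) (#|fibre (X :\ x0) g i|)`!)) => [|y /perms_at <-].
    by rewrite sum_nat_const f_fib (prod_fact_fibreD1 x0X).
  by rewrite sum1dep_card.
move=> pi; rewrite !inE => /andP[pi_on /forallP/(_ x0)/eqP <-].
by rewrite eqxx (perm_closed _ pi_on) x0X.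
Qed.

End FibrePerms.

Lemma Weight_IStep_imsetP n (pi : {perm 'I_(2 ^ n)}) :
  (forall k, Weight (pi k) = IStep n k) <-> (forall i, i < n -> pi @: IA n i = IB n i).
Proof.
split=> [wt i _ | img k].
  apply/eqP; rewrite eqEcard card_imset ?card_IA ?card_IB ?leqnn ?andbT; last exact: perm_inj.
  by apply/fintype.subsetP => _ /imsetP[k + ->]; rewrite !inE => /eqP <-; rewrite wt.
have IB_IA j : j < n -> pi k \in IB n j -> IStep n k = j.
  by move=> j_lt; rewrite -img // => /imsetP[k' + /perm_inj ->]; rewrite inE => /eqP.
have [k_lt | n_le_k] := ltnP (IStep n k) n.
  have : pi k \in pi @: IA n (IStep n k) by rewrite imset_f // inE.
  by rewrite img // inE => /eqP.
have IStep_n : IStep n k = n by apply/eqP; rewrite eqn_leq IStep_le.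
have Weight_le : Weight (pi k) <= n by rewrite (Weight_low_weight (ltn_ord _)) low_weight_le.
rewrite IStep_n; apply/eqP; rewrite eqn_leq Weight_le leqNgt; apply/negP => w_lt.
by move: (IB_IA _ w_lt); rewrite inE eqxx IStep_n => /(_ isT) n_w; rewrite -n_w ltnn in w_lt.
Qed.

Lemma card_Weight_IStep_perms n :
  #|[set pi : {perm 'I_(2 ^ n)} | [forall k, Weight (pi k) == IStep n k]]| =
  \prod_(i < n.+1) ('C(n, i))`!.
Proof.
have IStep_lt (k : 'I_(2 ^ n)) : IStep n k < n.+1 by rewrite ltnS IStep_le.
have fibre_Weight i : fibre [set: 'I_(2 ^ n)] (fun k => Weight k) i = IB n i.
  by apply/setP => k; rewrite !inE.
have fibre_IStep i : fibre [set: 'I_(2 ^ n)] (fun k => IStep n k) i = IA n i.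
  by apply/setP => k; rewrite !inE.
have := @card_fibre_perms _ _ _ IStep_lt [set: 'I_(2 ^ n)] (fun k => Weight k).
rewrite (eq_bigr (fun i : 'I_n.+1 => ('C(n, i))`!)) => [<-|i _]; last by rewrite fibre_IStep card_IA.
- apply: eq_card => pi; rewrite !inE.
  by have -> : perm_on [set: 'I_(2 ^ n)] pi by apply: subsetT_hint.
- by move=> k; rewrite inE.
- by move=> i; rewrite fibre_Weight fibre_IStep card_IA card_IB.
Qed.

Section Dyadic.
Variable R : realType.
Local Open Scope classical_set_scope.
Local Open Scope ring_scope.

(* The value of S_n on the dyadic intervals whose index has weight w. *)
Definition level (n w : nat) : R := 2 * w%:R - n%:R.

Lemma level_inj n : injective (level n).
Proof. by move=> a b; rewrite /level => eq_ab; apply/eqP; rewrite -(eqr_nat R); lra. Qed.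

Lemma ler_level n : {mono level n : a b / (a <= b)%N >-> a <= b}.
Proof. by move=> a b; rewrite lerD2r ler_pM2l // ler_nat. Qed.

Lemma D_bounds n k (y : R) : y \in D n k -> k%:R / 2 ^+ n <= y < k.+1%:R / 2 ^+ n.
Proof.
rewrite /D; case: eqP => [->|_]; rewrite inE /= in_itv //= => /andP[y_gt0 y_lt].
by rewrite mul0r ltW //= div1r.
Qed.

Lemma floor_dyadic n k i (y : R) : (i <= n)%N ->
  k%:R / 2 ^+ n <= y < k.+1%:R / 2 ^+ n ->
  Num.floor (y * 2 ^+ i) = (k %/ 2 ^ (n - i))%:Z.
Proof.
move=> i_le_n; set d := (2 ^ (n - i))%N; set q := (k %/ d)%N.
have d_gt0 : (0 : R) < d%:R by rewrite ltr0n expn_gt0.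
have exp2n : (2 : R) ^+ n = 2 ^+ i * d%:R by rewrite natrX -exprD subnKC.
rewrite !ler_pdivrMr ?ltr_pdivlMr ?exprn_gt0 // exp2n mulrA => /andP[ky yk].
apply: floor_def; apply/andP; split.
  by rewrite -(ler_pM2r d_gt0) -pmulrn (le_trans _ ky) // -natrM ler_nat leq_trunc_div.
rewrite -(ltr_pM2r d_gt0) -PoszD addn1 -pmulrn (lt_le_trans yk) // -natrM ler_nat.
by rewrite ltn_ceil // expn_gt0.
Qed.

Lemma floor_D n k (y : R) : y \in D n k -> Num.floor (y * 2 ^+ n) = k%:Z.
Proof. by move/D_bounds/(floor_dyadic (leqnn n)); rewrite subnn expn0 divn1. Qed.

Lemma eps_D n k i (y : R) : (i <= n)%N -> y \in D n k ->
  eps i y = odd (k %/ 2 ^ (n - i)).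
Proof. by move=> i_le_n /D_bounds/(floor_dyadic i_le_n); rewrite /eps => ->. Qed.

Lemma low_weight_rev n k :
  (\sum_(1 <= i < n.+1) odd (k %/ 2 ^ (n - i)))%N = low_weight n k.
Proof.
rewrite big_add1 succnK big_nat_rev /low_weight.
rewrite -(big_mkord xpredT (fun j => nat_of_bool (odd (k %/ 2 ^ j)))).
by apply: eq_big_nat => i /andP[_ i_lt]; congr (nat_of_bool (odd (k %/ 2 ^ _))); lia.
Qed.

Lemma S_D n k (y : R) : y \in D n k -> S n y = level n (low_weight n k).
Proof.
move=> yk; rewrite /S (eq_big_nat _ _ (F2 := fun i => 2 * (odd (k %/ 2 ^ (n - i)))%:R - 1)).
  by rewrite big_split /= -big_distrr -natr_sum low_weight_rev sumr_const_nat subSS subn0 mulNrn.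
move=> i /andP[i_gt0 i_le]; rewrite (eps_D _ yk) //.
by case: odd; rewrite /= ?expr1 ?expr2 ?mulrNN; lra.
Qed.

Lemma D_measurable n k : measurable (@D R n k).
Proof. by rewrite /D; case: ifP => _; exact: measurable_itv. Qed.

Lemma lebesgue_D n k : (lebesgue_measure (@D R n k) = (2 ^- n)%:E)%E.
Proof.
have exp2_gt0 : (0 : R) < 2 ^+ n by rewrite exprn_gt0.
rewrite /D; case: eqP => [_|_]; rewrite lebesgue_measure_itv /=.
  by rewrite lte_fin invr_gt0 exp2_gt0 -EFinB subr0.
rewrite lte_fin ltr_pM2r ?invr_gt0 // ltr_nat ltnSn -EFinB -mulrBl -natr1.
by rewrite addrAC subrr add0r mul1r.
Qed.

Lemma D_sub01 n k : (k < 2 ^ n)%N -> @D R n k `<=` `]0, 1[.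
Proof.
move=> k_lt y yk; have /D_bounds/andP[ky yk1] : y \in D n k by rewrite inE.
have exp2_gt0 : (0 : R) < 2 ^+ n by rewrite exprn_gt0.
rewrite /= in_itv /=; apply/andP; split.
  move: yk; rewrite /D; case: eqP => [_|/eqP k_neq0]; first by rewrite /= in_itv /= => /andP[].
  by move=> _; apply: lt_le_trans ky; rewrite divr_gt0 // ltr0n lt0n.
by apply: lt_le_trans yk1 _; rewrite ler_pdivrMr // mul1r -natrX ler_nat.
Qed.

Lemma in01_D n (x : R) : x \in `]0, 1[ -> exists k : 'I_(2 ^ n), x \in D n k.
Proof.
rewrite in_itv /= => /andP[x_gt0 x_lt1].
have exp2_gt0 : (0 : R) < 2 ^+ n by rewrite exprn_gt0.
have floor_ge0 : 0 <= Num.floor (x * 2 ^+ n) by rewrite floor_ge0 mulr_ge0 // ltW.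
set k := `|Num.floor (x * 2 ^+ n)|%N.
have floor_k : Num.floor (x * 2 ^+ n) = k%:Z by rewrite gez0_abs.
have k_lt : (k < 2 ^ n)%N.
  by rewrite -ltz_nat -floor_k floor_lt_int -pmulrn natrX gtr_pMl.
exists (Ordinal k_lt); have := floor_itv (x * 2 ^+ n).
rewrite floor_k -PoszD addn1 -!pmulrn /= => /andP[kx xk].
rewrite /D inE; case: eqP => [k0|_] /=; rewrite in_itv /=; apply/andP; split => //.
- by rewrite -div1r ltr_pdivlMr //; move: xk; rewrite k0.
- by rewrite ler_pdivrMr.
- by rewrite ltr_pdivlMr.
Qed.

Lemma bigsetU_ordP (T : Type) N (P : pred 'I_N) (F : 'I_N -> set T) x :
  (\big[setU/set0]_(k < N | P k) F k) x <-> exists2 k, P k & F k x.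
Proof.
rewrite -bigcup_seq_cond; split => [[k /andP[_ Pk] Fkx]|[k Pk Fkx]]; first by exists k.
by exists k => //; rewrite /= mem_index_enum Pk.
Qed.

Definition level_count n (t : R) : nat :=
  #|[set k : 'I_(2 ^ n) | level n (low_weight n k) <= t]%SET|.

Lemma F_SE n t : F_S n t = (level_count n t)%:R / 2 ^+ n.
Proof.
set P := fun k : 'I_(2 ^ n) => level n (low_weight n k) <= t.
rewrite /F_S; have -> : `]0, 1[ `&` [set x | S n x <= t] = \big[setU/set0]_(k < 2 ^ n | P k) D n k.
  apply/seteqP; split => [x [x01 Sx]|x /bigsetU_ordP[k Pk xk]].
    have [k xk] := in01_D n x01.
    by apply/bigsetU_ordP; exists k; [rewrite /P -(S_D xk) | rewrite -inE].
  split; first exact: D_sub01 (ltn_ord k) _ xk.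
  by rewrite /= (S_D (y := x) (k := k)) ?inE.
rewrite measure_bigsetU_ord_cond //; last first.
- move=> i j _ _ [x [xi xj]]; apply: val_inj; apply/eqP; rewrite -eqz_nat.
  by rewrite -(floor_D (n := n) (y := x) (k := i)) ?inE // (floor_D (k := j)) ?inE.
- by move=> i _; exact: D_measurable.
rewrite (eq_bigr (fun _ => (2 ^- n)%:E)) => [|i _]; last exact: lebesgue_D.
rewrite sumEFin /= /level_count -sum1dep_card natr_sum big_distrl /=.
by apply: eq_bigr => k _; rewrite mul1r.
Qed.

Lemma level_count_ge n i t : level n i <= t -> (SBC n i.+1 <= level_count n t)%N.
Proof.
move=> it; rewrite -card_low_weight_lt; apply: subset_leq_card.
by apply/fintype.subsetP => k; rewrite !inE ltnS -(ler_level n) => /le_trans; apply.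
Qed.

Lemma level_count_lt n i t : t < level n i -> (level_count n t <= SBC n i)%N.
Proof.
move=> ti; rewrite -card_low_weight_lt; apply: subset_leq_card.
apply/fintype.subsetP => k; rewrite !inE ltnNge -(ler_level n); apply: contraL => ik.
by rewrite -ltNge (lt_le_trans ti).
Qed.

Lemma Sstar_Dint n k (x : R) : (k < 2 ^ n)%N -> x \in Dint n k ->
  Sstar n x = level n (IStep n k).
Proof.
move=> k_lt; rewrite /Dint inE /= in_itv /= => /andP[kx xk].
have exp2_gt0 : (0 : R) < 2 ^+ n by rewrite exprn_gt0.
have [_ /andP[ik ki]] := IStep_block k_lt; set i := IStep n k in ik ki *.
set E := [set t | x <= F_S n t].
have E_level : E (level n i).
  rewrite /E /= F_SE; apply/ltW/(lt_le_trans xk).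
  by rewrite ler_pM2r ?invr_gt0 // ler_nat (leq_trans ki) // level_count_ge.
have level_lb : lbound E (level n i).
  move=> t; rewrite /E /= F_SE; apply: contraTT; rewrite -!ltNge => ti.
  apply: le_lt_trans kx; rewrite ler_pM2r ?invr_gt0 // ler_nat.
  exact: leq_trans (level_count_lt ti) ik.
have E_lbound : has_lbound E by exists (level n i).
by apply/eqP; rewrite eq_le (ge_inf E_lbound E_level) lb_le_inf //; exists (level n i).
Qed.

Lemma Dint_sub_D n k (x : R) : x \in Dint n k -> x \in D n k.
Proof.
rewrite /Dint /D !inE /=; case: eqP => [->|_]; last exact: subset_itv_oo_co.
by rewrite mul0r div1r.
Qed.

Lemma mid_Dint n k : ((k.*2.+1)%:R / 2 ^+ n.+1 : R) \in Dint n k.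
Proof.
have exp2_gt0 : (0 : R) < 2 ^+ n by rewrite exprn_gt0.
have -> : ((k.*2.+1)%:R / 2 ^+ n.+1 : R) = (k%:R + 2^-1) / 2 ^+ n.
  by rewrite exprS -natr1 -mul2n natrM; field; rewrite gt_eqF.
rewrite /Dint inE /= in_itv /= !ltr_pM2r ?invr_gt0 // -[k.+1%:R]natr1.
have half_gt0 : (0 : R) < 2^-1 by rewrite invr_gt0 ltr0n.
have half_lt1 : (2 : R)^-1 < 1 by rewrite invf_lt1 ?ltr1n.
by apply/andP; split; lra.
Qed.

Lemma ISstarE n (k : 'I_(2 ^ n)) : ISstar R n k = level n (IStep n k).
Proof. exact: Sstar_Dint (ltn_ord k) (mid_Dint n k). Qed.

Lemma ISE n (k : 'I_(2 ^ n)) : IS R n k = level n (Weight k).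
Proof. by rewrite /IS (S_D (Dint_sub_D (mid_Dint n k))) -Weight_low_weight. Qed.

Lemma admissibleP n (pi : {perm 'I_(2 ^ n)}) :
  admissible R pi <-> (forall k, Weight (pi k) = IStep n k).
Proof.
split=> [adm k | wt k x y xk ypk]; last first.
  by rewrite (Sstar_Dint (ltn_ord k) xk) (S_D ypk) -Weight_low_weight // wt.
apply: (@level_inj n); rewrite -ISE -ISstarE; symmetry.
exact: adm (mid_Dint n k) (Dint_sub_D (mid_Dint n (pi k))).
Qed.

Lemma ISstar_ISP n (pi : {perm 'I_(2 ^ n)}) :
  (forall k : 'I_(2 ^ n), ISstar R n k = IS R n (pi k)) <->
  (forall k, Weight (pi k) = IStep n k).
Proof.
split=> eq_k k; last by rewrite ISE ISstarE eq_k.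
by apply: (@level_inj n); rewrite -ISE -ISstarE eq_k.
Qed.

End Dyadic.

Theorem lemma1 (R : realType) (n : nat) (hn : (1 <= n)%N) :
  (forall pi : {perm 'I_(2 ^ n)},
     (admissible R pi <-> (forall k : 'I_(2 ^ n), Weight (pi k) = IStep n k)) /\
     (admissible R pi <-> (forall i : nat, (i < n)%N -> pi @: IA n i = IB n i)) /\
     (admissible R pi <-> (forall k : 'I_(2 ^ n), ISstar R n k = IS R n (pi k))))
  /\
  #|[set pi : {perm 'I_(2 ^ n)} | `[< admissible R pi >]]| =
    (\prod_(i < n.+1) ('C(n, i))`!)%N.
Proof.
(* The argument also covers n = 0. *)
split=> [pi|].
  by rewrite admissibleP -Weight_IStep_imsetP -ISstar_ISP.
rewrite -card_Weight_IStep_perms; apply: eq_card => pi; rewrite !inE.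
apply/asboolP/forallP => [/admissibleP wt k | wt]; first exact/eqP.
by apply/admissibleP => k; apply/eqP.
Qed.
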